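(* For all integers $k\ge 2$ and $n\ge 1$, $$\mathrm{spt}(k-1)'_{do}(n-1)-\mathrm{spt}k'_{do}(n)=\mathrm{spt}(k-1)'_{do}(n-2k+1)+p'_{do}(n-2k+1),$$ and $$\mathrm{spt}k_{do}(n)+\mathrm{spt}(k-1)_{do}(n-1)=\mathrm{spt}(k-1)_{do}(n-2k+1)+2p_{de}(n-k)+p_{do}(n-2k+1).$$
   Context: For a partition $\pi$, $s(\pi)$ is its smallest part. For $j\ge1$, $\mathrm{Spt}j_{do}(n)$ is the set of partitions $\pi$ of $n$ in which $s(\pi)$ occurs exactly $j$ times and the remaining parts (those larger than $s(\pi)$) are pairwise distinct and each has parity different from that of $s(\pi)$. $B_0(j,n)$ (resp. $B_1(j,n)$) is the number of $\pi\in\mathrm{Spt}j_{do}(n)$ whose number of parts greater than $s(\pi)$ is even (resp. odd). $\mathrm{spt}j_{do}(n)=B_0(j,n)+B_1(j,n)$ and $\mathrm{spt}j'_{do}(n)=B_0(j,n)-B_1(j,n)$; all of these are $0$ for $n\le 0$. $p_{de}(n)$ (resp. $p_{do}(n)$) is the number of partitions of $n$ into distinct even (resp. distinct odd) parts; $p'_{do}(n)$ is the number of partitions of $n$ into distinct odd parts with an even number of parts minus the number with an odd number of parts. These three functions equal $1$ at $n=0$ and $0$ for $n<0$. *)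

From mathcomp Require Import all_boot all_order all_algebra.
Set Implicit Arguments. Unset Strict Implicit. Unset Printing Implicit Defensive.
Import Order.TTheory GRing.Theory Num.Theory.

(* A partition of n is encoded by its multiplicity function m : part -> count,
   with parts and counts in {0,..,n}; m i = number of occurrences of the part i. *)
Definition ptn (n : nat) := {ffun 'I_n.+1 -> 'I_n.+1}.

Definition is_ptn n (m : ptn n) : bool :=
  ((m ord0 : nat) == 0%N) && (\sum_(i < n.+1) (i : nat) * (m i : nat) == n)%N.

Definition sptdo_cond (j : nat) n (m : ptn n) (s : 'I_n.+1) : bool :=
  [&& is_ptn m, (m s : nat) == j,
      [forall i : 'I_n.+1, ((i : nat) < s)%N ==> ((m i : nat) == 0%N)] &
      [forall i : 'I_n.+1, ((s : nat) < i)%N ==>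
          (((m i : nat) <= 1)%N && (((m i : nat) == 1%N) ==> (odd i != odd s)))]].

Definition nbig n (m : ptn n) (s : 'I_n.+1) : nat :=
  (\sum_(i < n.+1 | (s : nat) < i) (m i : nat))%N.

Definition B_nat (b : bool) (j n : nat) : nat :=
  #|[set m : ptn n | [exists s : 'I_n.+1, sptdo_cond j m s && (odd (nbig m s) == b)]]|.

Local Open Scope ring_scope.

Definition B0 (j : nat) (n : int) : int :=
  if n <= 0 then 0 else (B_nat false j `|n|%N)%:Z.
Definition B1 (j : nat) (n : int) : int :=
  if n <= 0 then 0 else (B_nat true j `|n|%N)%:Z.

Definition sptdo (j : nat) (n : int) : int := B0 j n + B1 j n.
Definition sptdo' (j : nat) (n : int) : int := B0 j n - B1 j n.

Definition nparts n (m : ptn n) : nat := (\sum_(i < n.+1) (m i : nat))%N.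

Definition distinct_parity_ptn (b : bool) n (m : ptn n) : bool :=
  is_ptn m && [forall i : 'I_n.+1,
     ((m i : nat) <= 1)%N && (((m i : nat) == 1%N) ==> (odd i == b))].

Definition pde (n : int) : int :=
  if n < 0 then 0
  else (#|[set m : ptn `|n|%N | distinct_parity_ptn false m]|)%:Z.
Definition pdo (n : int) : int :=
  if n < 0 then 0
  else (#|[set m : ptn `|n|%N | distinct_parity_ptn true m]|)%:Z.
Definition pdo' (n : int) : int :=
  if n < 0 then 0
  else \sum_(m : ptn `|n|%N | distinct_parity_ptn true m) (-1) ^+ nparts m.

(* Write W_a(N) = dpcoef z a N for the coefficient of q^N in prod_(i >= 0) (1 + z q^(a+2i)),
   so that W_a(N) = W_(a+2)(N) + z W_(a+2)(N - a).  Deleting the j copies of the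
   smallest part s is a bijection from the partitions in Spt j_do(n) with smallest part s
   onto the partitions of n - js into distinct parts > s of the parity of s + 1;
   weighting by z^(number of parts > s), their total is W_(s+1)(n - js), and z = 1,
   z = -1 give spt j_do and spt j'_do.  Expanding W_(s-1)(n - 1 - (k-1)s) by the
   recurrence turns, for every z,
     sum_(s >= 1) W_(s+1)(n - 1 - (k-1)s) + z sum_(s >= 1) W_(s+1)(n - ks)
   into sum_(s >= 0) W_(s+1)(n - 2k + 1 - (k-1)s) + (1 + z) W_2(n - k), whose term
   s = 0 is W_1(n - 2k + 1), i.e. p_do or p'_do, while W_2 counts distinct even parts. *)

From mathcomp Require Import all_boot all_order all_algebra.
From mathcomp Require Import zify ring lra.
Import Order.TTheory GRing.Theory Num.Theory.
Local Open Scope ring_scope.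

(* The coefficient of q^N in prod_(i < f) (1 + z q^(a+2i)). *)
Fixpoint dpcoefn (z : int) (a f : nat) (N : int) : int :=
  if f is f.+1 then dpcoefn z a.+2 f N + z * dpcoefn z a.+2 f (N - a%:Z)
  else (N == 0)%:Z.

Lemma dpcoefn_small z f a N : N < a%:Z -> dpcoefn z a f N = (N == 0)%:Z.
Proof.
elim: f a N => [|f IHf] a N //= ltNa.
rewrite !IHf; lia.
Qed.

Lemma dpcoefn_stable z a f g N : N < (a + 2 * f)%:Z -> (f <= g)%N ->
  dpcoefn z a g N = dpcoefn z a f N.
Proof.
elim: f a g N => [|f IHf] a g N ltN lefg; first by rewrite dpcoefn_small //; lia.
case: g lefg => // g lefg /=.
by rewrite !IHf //; lia.
Qed.

Lemma dpcoefn_fuel z a f g N : N < (a + 2 * f)%:Z -> N < (a + 2 * g)%:Z ->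
  dpcoefn z a f N = dpcoefn z a g N.
Proof.
move=> ltf ltg; case: (leqP f g) => lefg.
  by rewrite (@dpcoefn_stable _ _ f g).
by rewrite (@dpcoefn_stable _ _ g f) //; lia.
Qed.

Definition dpcoef z a (N : int) : int := dpcoefn z a `|N|%N.+1 N.
Arguments dpcoef : simpl never.

Lemma dpcoef_small z a N : N < a%:Z -> dpcoef z a N = (N == 0)%:Z.
Proof. exact: dpcoefn_small. Qed.

Lemma dpcoef_neg z a N : N < 0 -> dpcoef z a N = 0.
Proof. by move=> N_lt0; rewrite dpcoef_small; lia. Qed.

Lemma dpcoef_rec z a N :
  dpcoef z a N = dpcoef z a.+2 N + z * dpcoef z a.+2 (N - a%:Z).
Proof.
rewrite [LHS]/dpcoef [LHS]/=; congr (_ + z * _); apply: dpcoefn_fuel; lia.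
Qed.

Lemma forall_split {T : finType} (P : pred T) a :
  [forall i, P i] = P a && [forall (i | i != a), P i].
Proof.
apply/forallP/andP => [Pall|[Pa /forall_inP Pne] i]; first by split => //; apply/forall_inP.
by case: (eqVneq i a) => [->|]; last exact: Pne.
Qed.

Lemma forall_andb (T : finType) (P Q : pred T) :
  [forall i, P i] && [forall i, Q i] = [forall i, P i && Q i].
Proof.
apply/andP/forallP => [[/forallP hP /forallP hQ] i | hPQ]; first by rewrite hP hQ.
by split; apply/forallP => i; case/andP: (hPQ i).
Qed.

Definition upd {n} (m : ptn n) (a v : 'I_n.+1) : ptn n :=
  [ffun i => if i == a then v else m i].

Section Update.

Context {n : nat} (m : ptn n) (a : 'I_n.+1).

Lemma upd_at v : upd m a v a = v.
Proof. by rewrite ffunE eqxx. Qed.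

Lemma upd_ne v i : i != a -> upd m a v i = m i.
Proof. by rewrite ffunE => /negbTE->. Qed.

Lemma upd_upd v w : upd (upd m a v) a w = upd m a w.
Proof. by apply/ffunP => i; rewrite !ffunE; case: eqP. Qed.

Lemma upd_id : upd m a (m a) = m.
Proof. by apply/ffunP => i; rewrite ffunE; case: eqP => [->|]. Qed.

Lemma sum_upd (G : 'I_n.+1 -> nat -> nat) v :
  (\sum_i G i (upd m a v i) + G a (m a) = \sum_i G i (m i) + G a v)%N.
Proof.
rewrite (bigD1 a) // [in RHS](bigD1 a) //= upd_at.
rewrite (eq_bigr (fun i => G i (m i))) => [|i /upd_ne-> //]; lia.
Qed.

Lemma forall_upd (Q : 'I_n.+1 -> nat -> bool) v :
  [forall i, Q i (upd m a v i)] = Q a v && [forall (i | i != a), Q i (m i)].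
Proof.
rewrite (forall_split _ a) upd_at; congr (_ && _).
by apply: eq_forallb => i; case: (eqVneq i a) => // ia; rewrite upd_ne.
Qed.

End Update.

Lemma sum_upd_onto {n} (a v : 'I_n.+1) (P : pred (ptn n)) (F : ptn n -> int) :
  \sum_(m | P m && (m a == v)) F m
  = \sum_(m | P (upd m a v) && (m a == ord0)) F (upd m a v).
Proof.
rewrite (reindex_onto (fun m => upd m a v) (fun m => upd m a ord0)) /=.
  apply: eq_bigl => m; rewrite upd_at eqxx andbT upd_upd; congr (_ && _).
  apply/eqP/eqP => [<-|ma0]; first by rewrite upd_at.
  by rewrite -ma0 upd_id.
by move=> m /andP[_ /eqP <-]; rewrite upd_upd upd_id.
Qed.

Definition wsum {n} (m : ptn n) : nat := (\sum_(i < n.+1) i * m i)%N.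

Lemma wsum_upd {n} (m : ptn n) (a v : 'I_n.+1) :
  (wsum (upd m a v) + a * m a = wsum m + a * v)%N.
Proof. exact: (sum_upd m a (fun i c => i * c)%N). Qed.

Lemma nparts_upd {n} (m : ptn n) (a v : 'I_n.+1) :
  (nparts (upd m a v) + m a = nparts m + v)%N.
Proof. exact: (sum_upd m a (fun _ c => c)). Qed.

Definition dpart_at (a i c : nat) : bool :=
  (c <= 1)%N && ((c == 1)%N ==> (a <= i)%N && (odd i == odd a)).

Definition dpart (a : nat) {n} (m : ptn n) : bool :=
  [forall i : 'I_n.+1, dpart_at a i (m i)].

Lemma dpart_at_lt a i c : (i < a)%N -> dpart_at a i c = (c == 0)%N.
Proof. by move=> lt_ia; rewrite /dpart_at (leqNgt a) lt_ia; case: c => [|[|c]]. Qed.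

Lemma dpart_at_ne a i c : i != a -> dpart_at a i c = dpart_at a.+2 i c.
Proof.
move=> ia; rewrite /dpart_at; case: (c == 1)%N; rewrite //= negbK.
case: (eqVneq i a.+1) => [->|ia1]; first by rewrite ltnn /=; case: (odd a); rewrite !andbF.
by congr [&& _, _ & _]; lia.
Qed.

Lemma dpart_zero {a n} {m : ptn n} (i : 'I_n.+1) : dpart a m -> (i < a)%N -> m i = ord0.
Proof.
by move=> /forallP/(_ i) + lt_ia; rewrite dpart_at_lt // => /eqP m0; apply: val_inj.
Qed.

Lemma dpart_upd {n} (m : ptn n) (a0 v : 'I_n.+1) :
  dpart a0 (upd m a0 v) = (v <= 1)%N && dpart a0.+2 (upd m a0 ord0).
Proof.
rewrite /dpart (forall_upd _ _ (dpart_at a0)) (forall_upd _ _ (dpart_at a0.+2)).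
have -> : dpart_at a0 a0 v = (v <= 1)%N by rewrite /dpart_at leqnn eqxx implybT andbT.
congr (_ && _); apply: eq_forallb => i.
by case: (eqVneq i a0) => //= ia; rewrite -dpart_at_ne.
Qed.

Lemma dpart_split {n} (m : ptn n) (a0 : 'I_n.+1) :
  dpart a0 m = (m a0 <= 1)%N && dpart a0.+2 (upd m a0 ord0).
Proof. by rewrite -dpart_upd upd_id. Qed.

Definition dpsum n (z : int) (a : nat) (N : int) : int :=
  \sum_(m : ptn n | dpart a m && ((wsum m)%:Z == N)) z ^+ nparts m.

Lemma dpsum_rec n z a N : (1 <= a <= n)%N ->
  dpsum n z a N = dpsum n z a.+2 N + z * dpsum n z a.+2 (N - a%:Z).
Proof.
case/andP => a_gt0 le_an.
have lt_an1 : (a < n.+1)%N by lia.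
have lt_1n1 : (1 < n.+1)%N by lia.
pose a0 := Ordinal lt_an1; pose u := Ordinal lt_1n1.
have dpart_a0 m : dpart a0.+2 m -> m a0 = ord0 by move/(dpart_zero a0); apply.
rewrite /dpsum (bigID (fun m : ptn n => m a0 == ord0)) /=; congr (_ + _).
  apply: eq_bigl => m; case: (eqVneq (m a0) ord0) => [m0|nz]; last first.
    by rewrite andbF; apply/esym/negbTE; apply: contra_neqN nz => /andP[/dpart_a0->].
  by rewrite andbT (dpart_split m a0) -[X in upd m a0 X]m0 upd_id m0.
rewrite (eq_bigl (fun m => (dpart a0 m && ((wsum m)%:Z == N)) && (m a0 == u))); last first.
  move=> m; case: (boolP (dpart a0 m)) => //= dm; congr (_ && _).
  move: dm; rewrite (dpart_split m a0) => /andP[+ _].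
  by case: (m a0) => [[|[|c]] ?].
rewrite (sum_upd_onto a0 u (fun m => dpart a0 m && ((wsum m)%:Z == N))) mulr_sumr.
apply: eq_big => m.
  rewrite (dpart_upd m a0); case: (eqVneq (m a0) ord0) => [m0|nz]; last first.
    by rewrite andbF; apply/esym/negbTE; apply: contra_neqN nz => /andP[/dpart_a0->].
  have -> : upd m a0 ord0 = m by rewrite -m0 upd_id.
  have := wsum_upd m a0 u; rewrite m0 andbT /=; lia.
move=> /andP[_ /eqP m0]; have := nparts_upd m a0 u.
by rewrite m0 addn0 addn1 => ->; rewrite exprS.
Qed.

Lemma dpsum_large n z a N : (n < a)%N -> dpsum n z a N = (N == 0)%:Z.
Proof.
move=> lt_na; pose m0 : ptn n := [ffun => ord0].
have dpartE m : dpart a m = (m == m0).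
  apply/idP/eqP => [dm|->]; last by apply/forallP => i; rewrite ffunE.
  by apply/ffunP => i; rewrite ffunE (dpart_zero i dm) //; apply: leq_trans lt_na.
have wsum0 : wsum m0 = 0%N by rewrite /wsum big1 // => i _; rewrite ffunE muln0.
rewrite /dpsum (eq_bigl (fun m => (m == m0) && (N == 0))) => [|m]; last first.
  by rewrite dpartE; case: eqP => // ->; rewrite /= wsum0 eq_sym.
have [_|_] := eqVneq N 0; last by rewrite big_pred0 // => m; rewrite andbF.
rewrite (big_pred1 m0) => [|m]; last by rewrite andbT.
by rewrite /nparts big1 // => i _; rewrite ffunE.
Qed.

Lemma dpsum_dpcoef n z a N : (0 < a)%N -> N <= n%:Z -> dpsum n z a N = dpcoef z a N.
Proof.
move: {2}(n.+1 - a)%N (leqnn (n.+1 - a)) => d.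
elim: d a N => [|d IHd] a N le_d a_gt0 leNn.
  by rewrite dpsum_large ?dpcoef_small //; lia.
case: (leqP a n) => [le_an|lt_na]; last by rewrite dpsum_large ?dpcoef_small //; lia.
by rewrite dpsum_rec ?a_gt0 // dpcoef_rec !IHd //; lia.
Qed.

Lemma dpart_atS s i c : i != s ->
  dpart_at s.+1 i c
  = ((i < s)%N ==> (c == 0)%N)
    && ((s < i)%N ==> (c <= 1)%N && ((c == 1)%N ==> (odd i != odd s))).
Proof.
move=> ne_is; case: (ltngtP i s) => [lt_is|lt_si|eq_is].
- by rewrite andbT dpart_at_lt //; exact: leqW.
- by rewrite /dpart_at lt_si /=; case: (odd i); case: (odd s).
- by rewrite eq_is eqxx in ne_is.
Qed.

Lemma sptdo_condE j {n} (m : ptn n) (s : 'I_n.+1) : (0 < j)%N ->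
  sptdo_cond j m s
  = [&& (0 < s)%N, (m s == j :> nat), dpart s.+1 (upd m s ord0) & wsum m == n].
Proof.
move=> j_gt0; rewrite /sptdo_cond /is_ptn forall_andb.
rewrite [X in _ && (_ && X)](_ : _ = dpart s.+1 (upd m s ord0)); last first.
  rewrite /dpart (forall_upd _ _ (dpart_at s.+1)) /=; apply: eq_forallb => i.
  by case: (eqVneq i s) => [->|ne_is]; rewrite ?ltnn //= dpart_atS.
case: (posnP s) => [s0|s_gt0].
  have -> : s = ord0 by apply: val_inj.
  by apply/negbTE/and3P => [[/andP[/eqP m0 _] /eqP mj _]]; lia.
case: (boolP (dpart s.+1 (upd m s ord0))) => dm; last by rewrite ?(andbF, andFb).
have -> : ((m ord0 : nat) == 0)%N.
  have := dpart_zero ord0 dm isT; rewrite upd_ne => [->|] //.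
  by rewrite -val_eqE /= eq_sym -lt0n.
by rewrite /wsum /= andbT andbC.
Qed.

Lemma nbig_upd {n} (m : ptn n) (s v : 'I_n.+1) :
  dpart s.+1 m -> nbig (upd m s v) s = nparts m.
Proof.
move=> dm; rewrite /nbig /nparts [RHS](bigID (fun i : 'I_n.+1 => (s < i)%N)) /=.
rewrite [X in (_ = _ + X)%N]big1 ?addn0 => [|i]; last first.
  by rewrite -leqNgt -ltnS => /(dpart_zero i dm)->.
by apply: eq_bigr => i lt_si; rewrite upd_ne // -val_eqE /= gtn_eqF.
Qed.

Lemma sum_sptdo_cond z j n (s : 'I_n.+1) : (0 < j)%N ->
  \sum_(m : ptn n | sptdo_cond j m s) z ^+ nbig m s
  = if (0 < s)%N then dpsum n z s.+1 (n%:Z - (j * s)%:Z) else 0.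
Proof.
move=> j_gt0; case: (leqP j n) => [le_jn|lt_nj]; last first.
  rewrite big_pred0 => [|m]; last first.
    rewrite sptdo_condE //; apply/negbTE/and4P => -[_ /eqP ms _ _].
    by have := ltn_ord (m s); rewrite ms ltnS leqNgt lt_nj.
  case: ifP => // s_gt0; rewrite /dpsum big_pred0 // => m.
  by apply/negbTE/andP => -[_ /eqP]; nia.
pose v : 'I_n.+1 := Ordinal (le_jn : (j < n.+1)%N).
pose P m := [&& 0 < s, dpart s.+1 (upd m s ord0) & wsum m == n]%N.
rewrite (eq_bigl (fun m => P m && (m s == v))); last first.
  by move=> m; rewrite sptdo_condE // -val_eqE /=; case: (_ == j)%N; rewrite ?andbT ?andbF.
rewrite sum_upd_onto /P; case: (posnP s) => [s0|s_gt0].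
  by rewrite big_pred0 // => m; rewrite s0.
rewrite /dpsum; apply: eq_big => m; last first.
  move=> /andP[/and3P[_ + _] /eqP m0].
  by rewrite upd_upd -[X in upd m s X]m0 upd_id => /nbig_upd->.
rewrite /= upd_upd; case: (eqVneq (m s) ord0) => [m0|nz]; last first.
  by rewrite andbF; apply/esym/negbTE; apply: contra_neqN nz => /andP[/(dpart_zero s)->].
have -> : upd m s ord0 = m by rewrite -m0 upd_id.
by have := wsum_upd m s v; rewrite m0 andbT /=; lia.
Qed.

Lemma sptdo_cond_uniq j {n} (m : ptn n) (s s' : 'I_n.+1) : (0 < j)%N ->
  sptdo_cond j m s -> sptdo_cond j m s' -> s = s'.
Proof.
move=> j_gt0; have below t t' : sptdo_cond j m t -> sptdo_cond j m t' -> ~~ (t < t')%N.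
  rewrite !sptdo_condE // => /and4P[_ /eqP mt _ _] /and4P[_ _ dm _]; apply/negP => lt_tt'.
  have := dpart_zero t dm (ltnW lt_tt'); rewrite upd_ne => [mt0|]; last first.
    by rewrite -val_eqE ltn_eqF.
  by move: j_gt0; rewrite -mt mt0.
move=> c c'; apply/val_inj/eqP; rewrite eqn_leq.
by have := below _ _ c c'; have := below _ _ c' c; rewrite -!leqNgt => -> ->.
Qed.

Lemma card_exists_uniq (T S : finType) (C : T -> S -> bool) :
  (forall t s s', C t s -> C t s' -> s = s') ->
  #|[set t | [exists s, C t s]]| = (\sum_s #|[set t | C t s]|)%N.
Proof.
move=> uniqC; rewrite -sum1_card big_mkcond /=.
rewrite (eq_bigr (fun s => \sum_t (C t s : nat))) => [|s _]; last first.
  by rewrite -sum1_card big_mkcond; apply: eq_bigr => t _; rewrite inE; case: (C t s).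
rewrite exchange_big; apply: eq_bigr => t _; rewrite inE.
case: existsP => [[s Cts]|noC]; last first.
  by rewrite big1 // => s _; case: (boolP (C t s)) => // Cts; case: noC; exists s.
rewrite (bigD1 s) //= Cts big1 // => s' ne_s's.
by case: (boolP (C t s')) => // /(uniqC _ _ _ Cts) eq_ss'; rewrite eq_ss' eqxx in ne_s's.
Qed.

Lemma expr_odd {R : pzSemiRingType} {z : R} k : z ^+ 2 = 1 -> z ^+ k = z ^+ odd k.
Proof.
by move=> z2; rewrite -[in LHS](odd_double_half k) exprD -muln2 mulnC exprM z2 expr1n mulr1.
Qed.

Lemma B_nat_signed z j n : (0 < j)%N -> z ^+ 2 = 1 ->
  (B_nat false j n)%:Z + z * (B_nat true j n)%:Z
  = \sum_(s < n.+1) \sum_(m : ptn n | sptdo_cond j m s) z ^+ nbig m s.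
Proof.
move=> j_gt0 z2; rewrite /B_nat !card_exists_uniq; last 2 first.
- by move=> m s s' /andP[c _] /andP[c' _]; apply: sptdo_cond_uniq c c'.
- by move=> m s s' /andP[c _] /andP[c' _]; apply: sptdo_cond_uniq c c'.
rewrite -!natz !natr_sum mulr_sumr -big_split /=; apply: eq_bigr => s _.
rewrite [RHS](bigID (fun m => odd (nbig m s))) /= addrC.
congr (_ + _); rewrite -sum1_card natr_sum ?mulr_sumr; apply: eq_big => m;
  rewrite ?inE ?eqbF_neg ?eqb_id // => /andP[_].
all: by rewrite (expr_odd _ z2); case: odd; rewrite //= mulr1.
Qed.

Definition sptcoef (z : int) (j : nat) (n : int) (B : nat) : int :=
  \sum_(1 <= s < B) dpcoef z s.+1 (n - (j * s)%:Z).

Lemma sptcoef_le0 z j n B : (0 < j)%N -> n <= 0 -> sptcoef z j n B = 0.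
Proof.
move=> j_gt0 n_le0; rewrite /sptcoef big_nat_cond big1 // => s /andP[/andP[s_gt0 _] _].
by apply: dpcoef_neg; nia.
Qed.

Lemma sum_sptdo_cond_sptcoef z j n B : (0 < j)%N -> (n < B)%N ->
  \sum_(s < n.+1) \sum_(m : ptn n | sptdo_cond j m s) z ^+ nbig m s = sptcoef z j n B.
Proof.
move=> j_gt0 lt_nB.
pose F s := if (0 < s)%N then dpcoef z s.+1 (n%:Z - (j * s)%:Z) else 0.
rewrite (eq_bigr (fun s : 'I_n.+1 => F s)) => [|s _]; last first.
  by rewrite sum_sptdo_cond // /F; case: ifP => // s_gt0; rewrite dpsum_dpcoef //; lia.
rewrite -(big_mkord xpredT F) big_ltn // {1}/F add0r.
rewrite /sptcoef [in RHS](big_cat_nat _ (n := n.+1)) //=.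
rewrite [X in _ = _ + X]big_nat_cond [X in _ = _ + X]big1 ?addr0 => [|s].
  by apply: eq_big_nat => s /andP[s_gt0 _]; rewrite /F s_gt0.
move=> /andP[/andP[lt_ns _] _].
by apply: dpcoef_neg; nia.
Qed.

Lemma B_sptcoef z j n B : (0 < j)%N -> z ^+ 2 = 1 -> n < B%:Z ->
  B0 j n + z * B1 j n = sptcoef z j n B.
Proof.
move=> j_gt0 z2 lt_nB; rewrite /B0 /B1; case: ifP => [n_le0|n_gt0].
  by rewrite mulr0 addr0 sptcoef_le0.
have n_abs : n = `|n|%N :> int by lia.
by rewrite B_nat_signed // (sum_sptdo_cond_sptcoef z j _ B) -?n_abs //; lia.
Qed.

Lemma sptcoef_shift z j n B : (0 < B)%N ->
  sptcoef z j (n - 1) B.+2 + z * sptcoef z j.+1 n B.+2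
  = sptcoef z j (n - 2 * j.+1%:Z + 1) B + dpcoef z 1 (n - 2 * j.+1%:Z + 1)
    + (1 + z) * dpcoef z 2 (n - j.+1%:Z).
Proof.
move=> B_gt0; rewrite /sptcoef.
set M := n - 2 * j.+1%:Z + 1.
have -> : \sum_(1 <= s < B) dpcoef z s.+1 (M - (j * s)%:Z) + dpcoef z 1 M
          = \sum_(0 <= s < B) dpcoef z s.+1 (M - (j * s)%:Z).
  by rewrite [RHS]big_ltn //= muln0 subr0 addrC.
rewrite big_ltn // [X in _ + z * X]big_ltn // !(big_addn 0 B.+2 2) subn2 /=.
rewrite [in RHS](eq_bigr (fun i => dpcoef z (i + 2).+1 (n - 1 - (j * (i + 2))%:Z)
                         + z * dpcoef z (i + 2).+1 (n - (j.+1 * (i + 2))%:Z))); last first.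
  by move=> i _; rewrite dpcoef_rec addn2; congr (dpcoef _ _ _ + z * dpcoef _ _ _); lia.
rewrite [in RHS]big_split /= -mulr_sumr.
have -> : n - 1 - (j * 1)%:Z = n - j.+1%:Z by lia.
have -> : n - (j.+1 * 1)%:Z = n - j.+1%:Z by lia.
ring.
Qed.

Lemma dpart_at_parity b i c : (0 < i)%N ->
  dpart_at (if b then 1 else 2) i c = (c <= 1)%N && ((c == 1)%N ==> (odd i == b)).
Proof. by rewrite /dpart_at; case: c => [|[|c]] //=; case: b; case: i => [|[|i]]. Qed.

Lemma distinct_parity_ptnE b n (m : ptn n) :
  distinct_parity_ptn b m = dpart (if b then 1 else 2) m && (wsum m == n).
Proof.
rewrite /distinct_parity_ptn /is_ptn /dpart.
rewrite [in LHS](forall_split _ ord0) [in RHS](forall_split _ ord0).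
rewrite dpart_at_lt; last by case: b.
rewrite [X in _ = _ && X && _](_ : _ = [forall (i | i != ord0),
    ((m i : nat) <= 1)%N && (((m i : nat) == 1)%N ==> (odd i == b))]).
  by case: eqP => [->|]; rewrite /= ?andbF // andbC.
by apply: eq_forallb => i; case: eqVneq => //= ne_i0; rewrite dpart_at_parity // lt0n.
Qed.

Lemma sum_distinct_parity z b n :
  \sum_(m : ptn n | distinct_parity_ptn b m) z ^+ nparts m
  = dpcoef z (if b then 1 else 2) n.
Proof.
rewrite -(dpsum_dpcoef n) //; last by case: b.
by apply: eq_bigl => m; rewrite distinct_parity_ptnE eqz_nat.
Qed.

Lemma card_distinct_parity b n :
  #|[set m : ptn n | distinct_parity_ptn b m]|%:Z = dpcoef 1 (if b then 1 else 2) n.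
Proof.
rewrite -sum_distinct_parity -sum1_card -natz natr_sum.
by apply: eq_big => [m|m _]; rewrite ?inE ?expr1n.
Qed.

Lemma pdo'E N : pdo' N = dpcoef (-1) 1 N.
Proof.
rewrite /pdo'; case: ifP => [N_lt0|N_ge0]; first by rewrite dpcoef_neg.
by rewrite (sum_distinct_parity _ true); congr dpcoef; lia.
Qed.

Lemma pdoE N : pdo N = dpcoef 1 1 N.
Proof.
rewrite /pdo; case: ifP => [N_lt0|N_ge0]; first by rewrite dpcoef_neg.
by rewrite (card_distinct_parity true); congr dpcoef; lia.
Qed.

Lemma pdeE N : pde N = dpcoef 1 2 N.
Proof.
rewrite /pde; case: ifP => [N_lt0|N_ge0]; first by rewrite dpcoef_neg.
by rewrite (card_distinct_parity false); congr dpcoef; lia.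
Qed.

Theorem theorem3p1 (k n : nat) (hk : (2 <= k)%N) (hn : (1 <= n)%N) :
  sptdo' (k.-1) (n%:Z - 1) - sptdo' k n%:Z
    = sptdo' (k.-1) (n%:Z - 2 * k%:Z + 1) + pdo' (n%:Z - 2 * k%:Z + 1)
  /\
  sptdo k n%:Z + sptdo (k.-1) (n%:Z - 1)
    = sptdo (k.-1) (n%:Z - 2 * k%:Z + 1) + 2 * pde (n%:Z - k%:Z)
      + pdo (n%:Z - 2 * k%:Z + 1).
Proof.
case: k hk => [|j] // hk /=; have j_gt0 : (0 < j)%N by lia.
have sptdo'E i N B : (0 < i)%N -> N < B%:Z -> sptdo' i N = sptcoef (-1) i N B.
  move=> i_gt0 lt_NB.
  by rewrite /sptdo' -[- B1 i N]mulN1r (B_sptcoef _ _ _ B) // sqrrN expr1n.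
have sptdoE i N B : (0 < i)%N -> N < B%:Z -> sptdo i N = sptcoef 1 i N B.
  by move=> i_gt0 lt_NB; rewrite /sptdo -[B1 i N]mul1r (B_sptcoef _ _ _ B) // expr1n.
rewrite pdo'E pdoE pdeE.
rewrite (sptdo'E j _ n.+3) ?(sptdo'E j.+1 _ n.+3) ?(sptdo'E j _ n.+1); try lia.
rewrite (sptdoE j _ n.+3) ?(sptdoE j.+1 _ n.+3) ?(sptdoE j _ n.+1); try lia.
have := sptcoef_shift (-1) j n%:Z n.+1 isT; have := sptcoef_shift 1 j n%:Z n.+1 isT.
split; lra.
Qed.
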